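(* Let $g:[0,1]\to[0,\infty)$ be differentiable on $(0,1)$ and suppose that for some $p^*\in(0,1)$, $0<g'(p)\le(1/p-1/p^* )\frac{g(p)}{1-p}$ for $p\in(0,p^* )$ and $g'(p)<0$ for $p\in(p^*,1)$. For integers $r\ge1$ let $u_r(p,n,g)=g(p)^r(1-p)^n(1-(1-p)^n)/p$, let $p^*_r$ be a maximizer of $u_r(\cdot,n,g)$ over $(0,1)$, and let $c(r)=g(p^*_r)/(r-1)$. Then for all $r\ge3$: 1. If either $g(p)/p$ is non-increasing, or $n<1+\frac{4}{(1-p^* )^2}$, then $$c(r)\le0.5\,g\Big(\frac{3}{n+(3/p^* )-1}\Big).$$ 2. If $n\ge1+\frac{4}{(1-p^* )^2}$, then $$c(r)\le\max\Big(0.5\,g\Big(\frac{3}{n+(3/p^* )-1}\Big),\ \frac{1}{r_4-1}\,g\Big(\frac{r_4}{n+(r_4/p^* )-1}\Big)\Big),$$ where $r_4=0.5(n-1)(1-p^* )\Big(1+\sqrt{1-\frac{4}{(n-1)(1-p^* )^2}}\Big)$. *)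

From Stdlib Require Export Reals.
Open Scope R_scope.

Definition u (r n : nat) (g : R -> R) (p : R) : R :=
  g p ^ r * (1 - p) ^ n * (1 - (1 - p) ^ n) / p.

Definition r4 (n : nat) (ps : R) : R :=
  (1/2) * (INR n - 1) * (1 - ps) *
  (1 + sqrt (1 - 4 / ((INR n - 1) * (1 - ps) ^ 2))).

From Stdlib Require Import Reals Lra Lia Psatz.
From Coquelicot Require Import Coquelicot.
Open Scope R_scope.

(* At an interior maximiser pr of u_r, the first-order condition combined with
   n p (1-p)^(n-1) <= 1 - (1-p)^n gives n g(pr) <= r (1-pr) g'(pr).  As g' <= 0
   from p* on, this forces pr < p*, and the bound on g' then gives
   pr <= q(r) := r / (n + r/p* - 1); since g increases on (0, p*],
   c(r) <= g(q(r)) / (r-1).  The same bound on g' makes t |-> g(q(t)) / (t-1)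
   non-increasing on (1, oo), so c(r) <= g(q(3)) / 2 whenever r >= 3. *)

Lemma succ_mul_pow_le_one_sub_pow x k :
  0 <= x <= 1 -> INR (S k) * (1 - x) * x ^ k <= 1 - x ^ S k.
Proof.
  intros Hx; induction k as [|k IHk]; [simpl; lra|].
  rewrite S_INR; cbn [pow] in *.
  assert (0 <= x ^ k) by (apply pow_le; lra).
  assert (0 <= INR (S k)) by apply pos_INR.
  assert (0 <= INR (S k) * (1 - x) * (x ^ k - x * x ^ k))
    by (apply Rmult_le_pos; [apply Rmult_le_pos|]; nra).
  nra.
Qed.

Lemma deriv_pos_lt (f f' : R -> R) a b : a < b ->
  (forall c, a <= c <= b -> derivable_pt_lim f c (f' c)) ->
  (forall c, a < c < b -> 0 < f' c) -> f a < f b.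
Proof.
  intros Hab Hd Hpos.
  destruct (MVT_cor2 f f' a b Hab Hd) as [c [Hc Hcab]].
  assert (0 < f' c) by (apply Hpos; lra).
  nra.
Qed.

Lemma deriv_nonpos_le (f f' : R -> R) a b : a <= b ->
  (forall c, a <= c <= b -> derivable_pt_lim f c (f' c)) ->
  (forall c, a < c < b -> f' c <= 0) -> f b <= f a.
Proof.
  intros [Hab|<-] Hd Hneg; [|lra].
  destruct (MVT_cor2 f f' a b Hab Hd) as [c [Hc Hcab]].
  assert (f' c <= 0) by (apply Hneg; lra).
  nra.
Qed.

Definition w (n : nat) (p : R) : R := (1 - p) ^ n * (1 - (1 - p) ^ n) / p.

Definition dw (n : nat) (p : R) : R :=
  INR n * (1 - p) ^ Nat.pred n * (2 * (1 - p) ^ n - 1) / p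
  - (1 - p) ^ n * (1 - (1 - p) ^ n) / p ^ 2.

Lemma u_factor r n g p : u r n g p = g p ^ r * w n p.
Proof. unfold u, w, Rdiv; ring. Qed.

Lemma w_pos n p : (1 <= n)%nat -> 0 < p < 1 -> 0 < w n p.
Proof.
  intros Hn Hp; destruct n as [|m]; [lia|].
  assert (K := succ_mul_pow_le_one_sub_pow (1 - p) m ltac:(lra)).
  assert (0 < (1 - p) ^ m) by (apply pow_lt; lra).
  assert (0 < (1 - p) ^ S m) by (apply pow_lt; lra).
  assert (0 < INR (S m)) by (apply lt_0_INR; lia).
  assert (0 < INR (S m) * (1 - (1 - p)) * (1 - p) ^ m)
    by (apply Rmult_lt_0_compat; [apply Rmult_lt_0_compat|]; lra).
  unfold w; apply Rdiv_lt_0_compat; [apply Rmult_lt_0_compat|]; lra.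
Qed.

Lemma w_deriv n p : 0 < p -> derivable_pt_lim (w n) p (dw n p).
Proof.
  intros Hp; apply is_derive_Reals; unfold w, dw.
  auto_derive; [lra|].
  unfold Rminus, Rdiv; field; lra.
Qed.

Lemma w_log_deriv_le n p : (1 <= n)%nat -> 0 < p < 1 ->
  INR n * w n p <= - (1 - p) * dw n p.
Proof.
  intros Hn Hp; destruct n as [|m]; [lia|].
  assert (K := succ_mul_pow_le_one_sub_pow (1 - p) m ltac:(lra)).
  replace (1 - (1 - p)) with p in K by ring.
  assert (0 < (1 - p) ^ S (S m)) by (apply pow_lt; lra).
  assert (Hgap : - (1 - p) * dw (S m) p - INR (S m) * w (S m) p
                 = (1 - p) ^ S (S m) / p ^ 2
                   * ((1 - (1 - p) ^ S m) - INR (S m) * p * (1 - p) ^ m)).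
  { unfold w, dw; cbn [Nat.pred pow]; field; lra. }
  assert (0 <= (1 - p) ^ S (S m) / p ^ 2
               * ((1 - (1 - p) ^ S m) - INR (S m) * p * (1 - p) ^ m)).
  { apply Rmult_le_pos; [apply Rlt_le, Rdiv_lt_0_compat; [lra|apply pow_lt; lra]|lra]. }
  lra.
Qed.

Lemma u_deriv r n (g g' : R -> R) p : 0 < p -> derivable_pt_lim g p (g' p) ->
  derivable_pt_lim (u r n g) p
    (INR r * g p ^ Nat.pred r * g' p * w n p + g p ^ r * dw n p).
Proof.
  intros Hp Hg; apply is_derive_Reals.
  apply is_derive_ext with (fun x => g x ^ r * w n x);
    [intros x; symmetry; apply u_factor|].
  assert (Hgr := is_derive_pow g r p (g' p) (proj2 (is_derive_Reals _ _ _) Hg)).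
  assert (Hw := proj2 (is_derive_Reals _ _ _) (w_deriv n p Hp)).
  assert (H := is_derive_mult _ _ p _ _ Hgr Hw Rmult_comm).
  unfold plus, mult in H; simpl in H.
  replace (INR r * g p ^ Nat.pred r * g' p * w n p + g p ^ r * dw n p)
    with (INR r * g' p * g p ^ Nat.pred r * w n p + g p ^ r * dw n p) by ring.
  exact H.
Qed.

Lemma maximizer_first_order r n (g g' : R -> R) pr :
  (1 <= n)%nat -> (1 <= r)%nat -> 0 < pr < 1 ->
  derivable_pt_lim g pr (g' pr) -> 0 < g pr ->
  (forall q, 0 < q < 1 -> u r n g q <= u r n g pr) ->
  INR n * g pr <= INR r * (1 - pr) * g' pr.
Proof.
  intros Hn Hr Hpr Hd Hg Hmax.
  assert (Hcrit : INR r * g pr ^ Nat.pred r * g' pr * w n pr + g pr ^ r * dw n pr = 0).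
  { exact (deriv_maximum _ 0 1 pr (exist _ _ (u_deriv r n g g' pr (proj1 Hpr) Hd))
             (proj1 Hpr) (proj2 Hpr) (fun q h1 h2 => Hmax q (conj h1 h2))). }
  destruct r as [|k]; [lia|]; cbn [Nat.pred pow] in Hcrit.
  assert (Hw := w_pos n pr Hn Hpr).
  assert (Hlog := w_log_deriv_le n pr Hn Hpr).
  assert (Hgk : 0 < g pr ^ k) by (apply pow_lt; lra).
  assert (Hpos : 0 < g pr ^ k * w n pr) by (apply Rmult_lt_0_compat; lra).
  apply (Rmult_le_reg_r (g pr ^ k * w n pr)); [exact Hpos|].
  assert (g pr * (g pr ^ k * (INR n * w n pr))
          <= g pr * (g pr ^ k * (- (1 - pr) * dw n pr)))
    by (apply Rmult_le_compat_l; [lra|apply Rmult_le_compat_l; lra]).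
  nra.
Qed.

Lemma maximizer_value_pos r n (g : R -> R) pr q :
  (1 <= n)%nat -> (1 <= r)%nat -> 0 < q < 1 ->
  0 <= g pr -> 0 < g q -> u r n g q <= u r n g pr -> 0 < g pr.
Proof.
  intros Hn Hr Hq [Hg|Hg] Hgq Hle; [exact Hg|exfalso].
  rewrite !u_factor, <- Hg, pow_i, Rmult_0_l in Hle by lia.
  assert (0 < g q ^ r * w n q)
    by (apply Rmult_lt_0_compat; [apply pow_lt|apply w_pos]; assumption).
  lra.
Qed.

Section Profile.

Variables (g g' : R -> R) (ps : R).
Hypothesis g_nonneg : forall p, 0 <= p <= 1 -> 0 <= g p.
Hypothesis g_deriv : forall p, 0 < p < 1 -> derivable_pt_lim g p (g' p).
Hypothesis ps_range : 0 < ps < 1.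
Hypothesis g'_pos : forall p, 0 < p < ps -> 0 < g' p.
Hypothesis g'_le : forall p, 0 < p < ps -> g' p <= (1 / p - 1 / ps) * (g p / (1 - p)).
Hypothesis g'_neg : forall p, ps < p < 1 -> g' p < 0.

Lemma g_lt a b : 0 < a -> a < b -> b <= ps -> g a < g b.
Proof.
  intros Ha Hab Hb; apply (deriv_pos_lt g g'); [lra| |].
  - intros c Hc; apply g_deriv; lra.
  - intros c Hc; apply g'_pos; lra.
Qed.

Lemma g_le a b : 0 < a -> a <= b -> b <= ps -> g a <= g b.
Proof.
  intros Ha [Hab|<-] Hb; [left; apply g_lt; assumption|lra].
Qed.

Lemma g_le_g_ps p : 0 < p < 1 -> g p <= g ps.
Proof.
  intros Hp; destruct (Rlt_or_le p ps) as [Hlt|Hge].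
  - left; apply g_lt; lra.
  - apply (deriv_nonpos_le g g'); [lra| |].
    + intros c Hc; apply g_deriv; lra.
    + intros c Hc; left; apply g'_neg; lra.
Qed.

Lemma g'_ps_nonpos : g' ps <= 0.
Proof.
  assert (Hd : derivable_pt_lim g ps (g' ps)) by (apply g_deriv; lra).
  assert (E := deriv_maximum g 0 1 ps (exist _ (g' ps) Hd) ltac:(lra) ltac:(lra)
                 (fun x H0 H1 => g_le_g_ps x (conj H0 H1))).
  simpl in E; lra.
Qed.

Lemma maximizer_lt_ps r n pr : (1 <= n)%nat -> (1 <= r)%nat -> 0 < pr < 1 ->
  0 < g pr -> (forall q, 0 < q < 1 -> u r n g q <= u r n g pr) -> pr < ps.
Proof.
  intros Hn Hr Hpr Hg Hmax.
  assert (Hfo := maximizer_first_order r n g g' pr Hn Hr Hpr (g_deriv pr Hpr) Hg Hmax).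
  destruct (Rlt_or_le pr ps) as [Hlt|Hge]; [exact Hlt|exfalso].
  assert (Hg' : g' pr <= 0).
  { destruct (Req_dec pr ps) as [->|Hne]; [apply g'_ps_nonpos|left; apply g'_neg; lra]. }
  assert (0 < INR n) by (apply lt_0_INR; lia).
  assert (0 < INR r * (1 - pr)) by (apply Rmult_lt_0_compat; [apply lt_0_INR; lia|lra]).
  nra.
Qed.

Variable N : R.
Hypothesis N_ge1 : 1 <= N.

Definition peak_bound t := t / (N + t / ps - 1).

Definition cbar t := g (peak_bound t) / (t - 1).

Lemma t_lt_t_div_ps t : 0 < t -> t < t / ps.
Proof.
  intros Ht; apply (Rmult_lt_reg_r ps); [lra|].
  unfold Rdiv; rewrite Rmult_assoc, Rinv_l by lra; nra.
Qed.

Lemma peak_bound_range t : 1 <= t -> 0 < peak_bound t <= ps.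
Proof.
  intros Ht; assert (Htp := t_lt_t_div_ps t ltac:(lra)); unfold peak_bound.
  split; [apply Rdiv_lt_0_compat; lra|].
  apply (Rmult_le_reg_r (N + t / ps - 1)); [lra|].
  unfold Rdiv; rewrite Rmult_assoc, Rinv_l, Rmult_1_r by lra.
  replace (ps * (N + t * / ps - 1)) with (ps * (N - 1) + t) by (field; lra).
  nra.
Qed.

Lemma peak_bound_lt_ps t : 1 < N -> 1 <= t -> peak_bound t < ps.
Proof.
  intros HN Ht; assert (Htp := t_lt_t_div_ps t ltac:(lra)); unfold peak_bound.
  apply (Rmult_lt_reg_r (N + t / ps - 1)); [lra|].
  unfold Rdiv; rewrite Rmult_assoc, Rinv_l, Rmult_1_r by lra.
  replace (ps * (N + t * / ps - 1)) with (ps * (N - 1) + t) by (field; lra).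
  nra.
Qed.

Lemma maximizer_le_peak_bound r n pr : N = INR n ->
  (1 <= n)%nat -> (1 <= r)%nat -> 0 < pr < 1 ->
  0 < g pr -> (forall q, 0 < q < 1 -> u r n g q <= u r n g pr) ->
  pr <= peak_bound (INR r).
Proof.
  intros HN Hn Hr Hpr Hg Hmax.
  assert (Hlt := maximizer_lt_ps r n pr Hn Hr Hpr Hg Hmax).
  assert (Hfo := maximizer_first_order r n g g' pr Hn Hr Hpr (g_deriv pr Hpr) Hg Hmax).
  assert (Hb := g'_le pr (conj (proj1 Hpr) Hlt)).
  assert (HR : 1 <= INR r) by (apply (le_INR 1); lia).
  assert (Hslope : INR n * g pr <= INR r * (1 / pr - 1 / ps) * g pr).
  { replace (INR r * (1 / pr - 1 / ps) * g pr)
      with (INR r * (1 - pr) * ((1 / pr - 1 / ps) * (g pr / (1 - pr)))) by (field; lra).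
    assert (0 <= INR r * (1 - pr)) by (apply Rmult_le_pos; lra).
    nra. }
  assert (Hn_le : INR n <= INR r * (1 / pr - 1 / ps))
    by (apply (Rmult_le_reg_r (g pr)); lra).
  assert (Hden := t_lt_t_div_ps (INR r) ltac:(lra)).
  unfold peak_bound; rewrite HN.
  apply (Rmult_le_reg_r (INR n + INR r / ps - 1)); [lra|].
  unfold Rdiv at 2; rewrite Rmult_assoc, Rinv_l, Rmult_1_r by lra.
  replace (pr * (INR n + INR r / ps - 1))
    with (pr * (INR n - INR r * (1 / pr - 1 / ps)) + INR r - pr) by (field; lra).
  assert (pr * (INR n - INR r * (1 / pr - 1 / ps)) <= 0) by nra.
  lra.
Qed.

Lemma cbar_deriv t : 1 < t ->
  derivable_pt_lim cbar t
    ((g' (peak_bound t) * ((N - 1) / (N + t / ps - 1) ^ 2) * (t - 1)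
      - g (peak_bound t)) / (t - 1) ^ 2).
Proof.
  intros Ht; destruct (peak_bound_range t ltac:(lra)) as [Hq1 Hq2].
  assert (Hd := g_deriv (peak_bound t) ltac:(lra)).
  assert (E : Derive g (peak_bound t) = g' (peak_bound t))
    by (apply is_derive_unique, is_derive_Reals, Hd).
  assert (Htp := t_lt_t_div_ps t ltac:(lra)).
  apply is_derive_Reals; unfold cbar, peak_bound in *.
  auto_derive.
  - repeat split; try lra.
    exists (g' (t / (N + t / ps - 1))); apply is_derive_Reals, Hd.
  - replace (Derive (fun x => g x) _) with (g' (t / (N + t / ps - 1)))
      by (rewrite <- E; reflexivity).
    change (t * / (N + t * / ps + - (1))) with (t / (N + t / ps - 1)).
    field; repeat split; nra.
Qed.

Lemma g'_peak_bound_le t : 1 < t ->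
  g' (peak_bound t) * ((N - 1) / (N + t / ps - 1) ^ 2) * (t - 1)
  <= g (peak_bound t).
Proof.
  intros Ht; destruct (peak_bound_range t ltac:(lra)) as [Hq1 Hq2].
  assert (Hg : 0 <= g (peak_bound t)) by (apply g_nonneg; lra).
  destruct (Req_dec N 1) as [->|HN1].
  { unfold Rminus at 1; rewrite Rplus_opp_r; unfold Rdiv at 1; lra. }
  assert (Htp := t_lt_t_div_ps t ltac:(lra)).
  set (D := N + t / ps - 1) in *.
  assert (Hq : peak_bound t < ps) by (apply peak_bound_lt_ps; lra).
  assert (Hb := g'_le (peak_bound t) (conj Hq1 Hq)).
  replace (1 / peak_bound t - 1 / ps) with ((N - 1) / t) in Hb
    by (unfold peak_bound, D; field; repeat split; nra).
  replace (1 - peak_bound t) with ((D - t) / D) in Hb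
    by (unfold peak_bound; fold D; field; unfold D; lra).
  assert (HD : t < D) by (unfold D; lra).
  assert (HDt : N - 1 <= D - t) by (unfold D; lra).
  clearbody D.
  assert (Hratio : (N - 1) ^ 2 * (t - 1) <= t * D * (D - t)).
  { assert ((N - 1) * (N - 1) <= D * (D - t)) by (apply Rmult_le_compat; lra).
    assert (0 <= (N - 1) ^ 2) by nra.
    nra. }
  assert (Hc : 0 <= (N - 1) / D ^ 2 * (t - 1))
    by (apply Rmult_le_pos; [apply Rdiv_le_0_compat; [lra|apply pow_lt; lra]|lra]).
  apply Rle_trans with ((N - 1) / t * (g (peak_bound t) / ((D - t) / D))
                        * ((N - 1) / D ^ 2 * (t - 1))).
  { rewrite Rmult_assoc; apply Rmult_le_compat_r; assumption. }
  replace ((N - 1) / t * (g (peak_bound t) / ((D - t) / D)) * ((N - 1) / D ^ 2 * (t - 1)))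
    with (g (peak_bound t) * ((N - 1) ^ 2 * (t - 1) / (t * D * (D - t))))
    by (field; repeat split; lra).
  rewrite <- (Rmult_1_r (g (peak_bound t))) at 2.
  apply Rmult_le_compat_l; [assumption|].
  assert (0 < t * D * (D - t))
    by (apply Rmult_lt_0_compat; [apply Rmult_lt_0_compat|]; lra).
  apply Rmult_le_reg_r with (t * D * (D - t)); [assumption|].
  unfold Rdiv; rewrite Rmult_assoc, Rinv_l by lra; lra.
Qed.

Lemma cbar_antitone s t : 1 < s -> s <= t -> cbar t <= cbar s.
Proof.
  intros Hs Hst; eapply (deriv_nonpos_le cbar _ s t Hst).
  - intros c Hc; apply cbar_deriv; lra.
  - intros c Hc.
    assert (Hnum := g'_peak_bound_le c ltac:(lra)).
    assert (0 < / (c - 1) ^ 2) by (apply Rinv_0_lt_compat, pow_lt; lra).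
    unfold Rdiv; nra.
Qed.

Lemma maximizer_value_le_cbar3 r n pr : N = INR n ->
  (1 <= n)%nat -> (3 <= r)%nat -> 0 < pr < 1 ->
  (forall q, 0 < q < 1 -> u r n g q <= u r n g pr) ->
  g pr / (INR r - 1) <= (1 / 2) * g (peak_bound 3).
Proof.
  intros HN Hn Hr Hpr Hmax.
  assert (HR : 3 <= INR r) by (replace 3 with (INR 3) by (simpl; ring); apply le_INR; lia).
  assert (Hg_half : 0 < g (ps / 2)).
  { assert (0 <= g (ps / 4)) by (apply g_nonneg; lra).
    assert (g (ps / 4) < g (ps / 2)) by (apply g_lt; lra).
    lra. }
  assert (Hg : 0 < g pr).
  { apply (maximizer_value_pos r n g pr (ps / 2)); try lia; try lra.
    - apply g_nonneg; lra.
    - apply Hmax; lra. }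
  assert (Hpeak := maximizer_le_peak_bound r n pr HN Hn ltac:(lia) Hpr Hg Hmax).
  assert (Hrange := peak_bound_range (INR r) ltac:(lra)).
  assert (Hc : g pr / (INR r - 1) <= cbar (INR r)).
  { unfold cbar, Rdiv; apply Rmult_le_compat_r.
    - apply Rlt_le, Rinv_0_lt_compat; lra.
    - apply g_le; lra. }
  assert (Hanti := cbar_antitone 3 (INR r) ltac:(lra) HR).
  unfold cbar at 2 in Hanti.
  replace ((1 / 2) * g (peak_bound 3)) with (g (peak_bound 3) / (3 - 1)) by field.
  lra.
Qed.

End Profile.

Theorem lemma8 (g g' : R -> R) (ps : R) (n r : nat) (pr : R)
  (Hg_nonneg : forall p, 0 <= p <= 1 -> 0 <= g p)
  (Hg_deriv : forall p, 0 < p < 1 -> derivable_pt_lim g p (g' p))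
  (Hps : 0 < ps < 1)
  (Hinc : forall p, 0 < p < ps ->
            0 < g' p /\ g' p <= (1 / p - 1 / ps) * (g p / (1 - p)))
  (Hdec : forall p, ps < p < 1 -> g' p < 0)
  (Hn : (1 <= n)%nat)
  (Hr : (3 <= r)%nat)
  (Hpr : 0 < pr < 1)
  (Hmax : forall q, 0 < q < 1 -> u r n g q <= u r n g pr) :
  ( ((forall p q, 0 < p -> p <= q -> q <= 1 -> g q / q <= g p / p)
      \/ INR n < 1 + 4 / (1 - ps) ^ 2) ->
    g pr / (INR r - 1) <= (1/2) * g (3 / (INR n + 3 / ps - 1)) )
  /\
  ( INR n >= 1 + 4 / (1 - ps) ^ 2 ->
    g pr / (INR r - 1) <=
      Rmax ((1/2) * g (3 / (INR n + 3 / ps - 1)))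
           (1 / (r4 n ps - 1) * g (r4 n ps / (INR n + r4 n ps / ps - 1))) ).
Proof.
  assert (Hbound : g pr / (INR r - 1) <= (1/2) * g (3 / (INR n + 3 / ps - 1))).
  { apply (maximizer_value_le_cbar3 g g' ps Hg_nonneg Hg_deriv Hps
             (fun p Hp => proj1 (Hinc p Hp)) (fun p Hp => proj2 (Hinc p Hp)) Hdec
             (INR n) (le_INR 1 n Hn) r n pr eq_refl Hn Hr Hpr Hmax). }
  split; intros _; [exact Hbound|].
  eapply Rle_trans; [exact Hbound|apply Rmax_l].
Qed.
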